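(* Let $K$ be a field, $\mathcal A$ a $K$-algebra, $\vartheta$ any one of the four types (left, right, pre-two-sided, two-sided), and $V$ a $K$-subspace of $\mathcal A$ such that every element of $\sqrt V$ is algebraic over $K$. Then $V$ is a $\vartheta$-Mathieu subspace of $\mathcal A$ if and only if $(e)_\vartheta\subseteq V$ for every idempotent $e\in V$.
   Context: All algebras are associative and unital. For a subset $S\subseteq\mathcal A$, $\sqrt S$ is the set of $a\in\mathcal A$ with $a^m\in S$ for all sufficiently large $m$. An idempotent is $e$ with $e^2=e$. Let $V$ be a $K$-subspace of $\mathcal A$. $V$ is a left (resp. right) Mathieu subspace if whenever $a\in\mathcal A$ satisfies $a^m\in V$ for all $m\ge1$, then for every $b\in\mathcal A$ there is $N$ with $ba^m\in V$ (resp. $a^mb\in V$) for all $m\ge N$; pre-two-sided if it is both left and right; two-sided if whenever $a^m\in V$ for all $m\ge1$, for all $b,c\in\mathcal A$ there is $N$ with $ba^mc\in V$ for all $m\ge N$. For $x\in\mathcal A$: $(x)_\vartheta$ is $\mathcal Ax$ if $\vartheta$ = left, $x\mathcal A$ if $\vartheta$ = right, the two-sided ideal generated by $x$ if $\vartheta$ = two-sided, and $x\mathcal A+\mathcal Ax$ if $\vartheta$ = pre-two-sided. *)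

From HB Require Import structures.
From mathcomp Require Import all_boot all_order all_algebra.
Set Implicit Arguments. Unset Strict Implicit. Unset Printing Implicit Defensive.
Import GRing.Theory.
Local Open Scope ring_scope.

Inductive mtype := MLeft | MRight | MPreTwoSided | MTwoSided.

Section Defs.
Variables (K : fieldType) (A : algType K).

Definition is_subspace (V : A -> Prop) : Prop :=
  V 0 /\ forall (k : K) (u v : A), V u -> V v -> V (k *: u + v).

Definition radical (V : A -> Prop) : A -> Prop :=
  fun a => exists N : nat, forall m : nat, (N <= m)%N -> V (a ^+ m).

Definition algebraic_over (a : A) : Prop :=
  exists p : {poly K}, p != 0 /\ horner_alg a p = 0.

Definition is_idempotent (e : A) : Prop := e * e = e.

Definition all_pows_in (V : A -> Prop) (a : A) : Prop :=
  forall m : nat, (1 <= m)%N -> V (a ^+ m).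

Definition left_mathieu (V : A -> Prop) : Prop :=
  forall a : A, all_pows_in V a -> forall b : A,
    exists N : nat, forall m : nat, (N <= m)%N -> V (b * a ^+ m).

Definition right_mathieu (V : A -> Prop) : Prop :=
  forall a : A, all_pows_in V a -> forall b : A,
    exists N : nat, forall m : nat, (N <= m)%N -> V (a ^+ m * b).

Definition two_sided_mathieu (V : A -> Prop) : Prop :=
  forall a : A, all_pows_in V a -> forall b c : A,
    exists N : nat, forall m : nat, (N <= m)%N -> V (b * a ^+ m * c).

Definition mathieu (t : mtype) (V : A -> Prop) : Prop :=
  match t with
  | MLeft => left_mathieu V
  | MRight => right_mathieu V
  | MPreTwoSided => left_mathieu V /\ right_mathieu V
  | MTwoSided => two_sided_mathieu V
  end.

Definition gen_ideal (t : mtype) (x : A) : A -> Prop :=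
  match t with
  | MLeft => fun y => exists b : A, y = b * x
  | MRight => fun y => exists b : A, y = x * b
  | MPreTwoSided => fun y => exists b c : A, y = x * b + c * x
  | MTwoSided => fun y => exists (n : nat) (b c : 'I_n -> A),
                   y = \sum_(i < n) b i * x * c i
  end.

End Defs.

From mathcomp Require Import all_boot all_order all_algebra ring.
Import GRing.Theory.
Local Open Scope ring_scope.

(* Factor the annihilating polynomial of an algebraic a as q X^n with
   q(0) != 0; a Bezout relation u q + v X^(n+1) = 1 makes e = (v X^(n+1))(a)
   an idempotent that fixes every high power of a and, having no constant term,
   lies in V when all powers of a do.  Then b a^m = (b a^m) e, a^m b = e (a^m b)
   and b a^m c = b e (a^m c) lie in (e).  Conversely, the powers of an
   idempotent e all equal e, so the Mathieu condition at a = e puts (e) in V. *)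

Lemma Bezout_idempotent {R : comPzRingType} {q x u v : R} :
  u * q + v * x = 1 ->
  (v * x) * (v * x) = v * x - (u * v) * (q * x) /\ x * (v * x) = x - u * (q * x).
Proof.
move=> Bez; split.
- by rewrite -[X in X - _](mulr1 (v * x)) -Bez; ring.
- by rewrite -[X in _ = X - _]mulr1 -Bez; ring.
Qed.

Lemma absorbs_expr_ge (R : pzRingType) (a e : R) (n : nat) :
  a ^+ n * e = a ^+ n -> e * a ^+ n = a ^+ n ->
  forall m, (n <= m)%N -> a ^+ m * e = a ^+ m /\ e * a ^+ m = a ^+ m.
Proof.
move=> ane ena m /subnK <-; rewrite exprD; split; first by rewrite -mulrA ane.
by rewrite -exprD addnC exprD mulrA ena.
Qed.

Lemma idempotent_exprS {R : pzRingType} {e : R} :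
  e * e = e -> forall m, e ^+ m.+1 = e.
Proof. by move=> ee; elim=> [|m IHm] //; rewrite exprS IHm ee. Qed.

Lemma idempotent_eventually {R : pzRingType} (P : R -> Prop) {e : R} :
  e * e = e -> (exists N, forall m, (N <= m)%N -> P (e ^+ m)) -> P e.
Proof.
move=> ee [N PN]; rewrite -(idempotent_exprS ee N); exact/PN/leqnSn.
Qed.

Section FittingIdempotent.
Variables (K : fieldType) (A : algType K).

Lemma horner_alg_comm (a : A) (p q : {poly K}) :
  horner_alg a p * horner_alg a q = horner_alg a q * horner_alg a p.
Proof. by rewrite -!rmorphM mulrC. Qed.

Lemma algebraic_Fitting_idempotent (a : A) : algebraic_over a ->
  exists (v : {poly K}) (n : nat), let e := horner_alg a (v * 'X ^+ n.+1) in
  is_idempotent e /\ a ^+ n.+1 * e = a ^+ n.+1 /\ e * a ^+ n.+1 = a ^+ n.+1.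
Proof.
case=> p [p_neq0 pa0].
have [n [q]] := multiplicity_XsubC p 0.
rewrite p_neq0 subr0 /= => q0_neq0 Dp.
have : coprimep q ('X ^+ n.+1) by rewrite coprimep_pexpr // coprimepX.
case/Bezout_eq1_coprimepP=> [[u v]] /= Bez.
have [idem absorb] := Bezout_idempotent Bez.
have qXa0 : horner_alg a (q * 'X ^+ n.+1) = 0.
  by rewrite exprSr mulrA -Dp rmorphM /= pa0 mul0r.
have Xa : horner_alg a ('X ^+ n.+1) = a ^+ n.+1 by rewrite rmorphXn /= horner_algX.
exists v, n; set e := horner_alg a _.
have ane : a ^+ n.+1 * e = a ^+ n.+1.
  by rewrite -Xa -rmorphM absorb rmorphB rmorphM /= qXa0 mulr0 subr0.
split; last by split=> //; rewrite -Xa horner_alg_comm Xa.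
by rewrite /is_idempotent -rmorphM idem rmorphB (rmorphM _ (u * v)) /= qXa0 mulr0 subr0.
Qed.

Section Subspace.
Variable V : A -> Prop.
Hypothesis subV : is_subspace V.

Lemma subspace_add u w : V u -> V w -> V (u + w).
Proof. by move=> Vu Vw; have := proj2 subV 1 u w Vu Vw; rewrite scale1r. Qed.

Lemma subspace_sum n (F : 'I_n -> A) :
  (forall i, V (F i)) -> V (\sum_(i < n) F i).
Proof.
by move=> VF; apply: (big_ind V) => //; [exact: (proj1 subV) | exact: subspace_add].
Qed.

Lemma subspace_horner_mulXS (a : A) : all_pows_in V a ->
  forall (w : {poly K}) (n : nat), V (horner_alg a (w * 'X ^+ n.+1)).
Proof.
move=> Va; elim/poly_ind=> [|w c IHw] n; first by rewrite mul0r rmorph0; exact: (proj1 subV).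
rewrite mulrDl rmorphD -mulrA -exprS /= mul_polyC linearZ /= rmorphXn /= horner_algX.
by rewrite addrC mulr_algl; apply: (proj2 subV); [exact: Va | exact: IHw].
Qed.

Lemma pows_in_absorbing_idempotent (a : A) :
  all_pows_in V a -> algebraic_over a ->
  exists e N, [/\ is_idempotent e, V e &
    forall m, (N <= m)%N -> a ^+ m * e = a ^+ m /\ e * a ^+ m = a ^+ m].
Proof.
move=> Va /algebraic_Fitting_idempotent[v [n [idem [ane ena]]]].
exists (horner_alg a (v * 'X ^+ n.+1)), n.+1; split=> //.
- exact: subspace_horner_mulXS.
- exact: absorbs_expr_ge.
Qed.

Lemma mathieu_idempotent_ideal (t : mtype) : mathieu t V ->
  forall e, is_idempotent e -> V e -> forall y, gen_ideal t e y -> V y.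
Proof.
move=> MV e idem Ve.
have Ve_pows : all_pows_in V e by case=> // m _; rewrite idempotent_exprS.
have left_e : left_mathieu V -> forall b, V (b * e).
  by move=> LV b; apply: (idempotent_eventually (fun x => V (b * x)) idem); exact: LV.
have right_e : right_mathieu V -> forall b, V (e * b).
  by move=> RV b; apply: (idempotent_eventually (fun x => V (x * b)) idem); exact: RV.
case: t MV => /= MV y.
- by case=> b ->; exact: left_e.
- by case=> b ->; exact: right_e.
- by case: MV => LV RV [b [c ->]]; apply: subspace_add; [exact: right_e | exact: left_e].
- case=> n [b [c ->]]; apply: subspace_sum => i.
  by apply: (idempotent_eventually (fun x => V (b i * x * c i)) idem); exact: MV.
Qed.

Lemma idempotent_ideal_mathieu (t : mtype) :
  (forall a, radical V a -> algebraic_over a) ->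
  (forall e, is_idempotent e -> V e -> forall y, gen_ideal t e y -> V y) ->
  mathieu t V.
Proof.
move=> alg_rad IV.
have absorb a (Va : all_pows_in V a) :=
  pows_in_absorbing_idempotent a Va (alg_rad a (ex_intro _ 1%N Va)).
case: t IV => /= IV.
- move=> a /absorb[e [N [idem Ve ae]]] b; exists N => m /ae[ame _].
  by apply: (IV e idem Ve); exists (b * a ^+ m); rewrite -mulrA ame.
- move=> a /absorb[e [N [idem Ve ae]]] b; exists N => m /ae[_ ema].
  by apply: (IV e idem Ve); exists (a ^+ m * b); rewrite mulrA ema.
- split=> a /absorb[e [N [idem Ve ae]]] b; exists N => m /ae[ame ema];
    apply: (IV e idem Ve).
  + by exists 0, (b * a ^+ m); rewrite mulr0 add0r -mulrA ame.
  + by exists (a ^+ m * b), 0; rewrite mul0r addr0 mulrA ema.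
- move=> a /absorb[e [N [idem Ve ae]]] b c; exists N => m /ae[_ ema].
  apply: (IV e idem Ve); exists 1%N, (fun=> b), (fun=> a ^+ m * c).
  by rewrite big_ord1 -(mulrA b e) (mulrA e) ema mulrA.
Qed.

End Subspace.
End FittingIdempotent.

Theorem theorem4p2 (K : fieldType) (A : algType K) (t : mtype) (V : A -> Prop)
  (hV : is_subspace V)
  (halg : forall a : A, radical V a -> algebraic_over a) :
  mathieu t V <->
  (forall e : A, is_idempotent e -> V e -> forall y : A, gen_ideal t e y -> V y).
Proof.
split; first exact: mathieu_idempotent_ideal.
exact: idempotent_ideal_mathieu.
Qed.
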